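(* Let $\mathcal{U}$ be a finite-dimensional real Hilbert space, let $\mathcal{W}$ be a real Hilbert space, let $\phi:\mathcal{U}\to\mathcal{B}(\mathcal{U},\mathcal{W})$ be a map, let $(u_i,y_i)\in\mathcal{U}\times\mathcal{U}$, $i=1,\dots,n$, be data, and let $\gamma>0$. For $Q\in\mathcal{B}(\mathcal{W})$ let $L(Q)=\sum_{i=1}^n\|\phi(u_i)^*Q\phi(u_i)u_i-y_i\|_{\mathcal{U}}^2$, and let $\Phi\in\mathcal{B}(\mathcal{U}^n,\mathcal{W})$ be defined by $\Phi(v_1,\dots,v_n)=\sum_{i=1}^n\phi(u_i)v_i$. Consider the problems $$\text{(P)}\quad \min_{Q\in\mathcal{B}^+(\mathcal{W})} L(Q)+\gamma\|Q\|,\qquad \text{(P$'$)}\quad \min_{M\in\mathcal{B}^+(\mathcal{U}^n)} L(\Phi M\Phi^* )+\gamma\|\Phi M\Phi^*\|,$$ where $\|\cdot\|$ is the operator norm. Then a solution (minimizer) of (P) exists if and only if a solution of (P$'$) exists. Moreover, if it exists, a solution of (P) is given by $\hat Q=\Phi M\Phi^*$, where $M\in\mathcal{B}^+(\mathcal{U}^n)$ is a solution of (P$'$).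
   Context: $\mathcal{U}^n$ is the $n$-fold Cartesian product with inner product $\sum_i\langle u_i,v_i\rangle_{\mathcal{U}}$. $\mathcal{B}(\mathcal{X},\mathcal{Y})$ denotes bounded linear operators, $\mathcal{B}(\mathcal{X})=\mathcal{B}(\mathcal{X},\mathcal{X})$, $^*$ is the adjoint. An operator $G$ on a Hilbert space $\mathcal{H}$ is nonnegative if $\langle Gu,u\rangle_{\mathcal{H}}\ge0$ for all $u$ (self-adjointness not required); $\mathcal{B}^+(\mathcal{H})$ is the set of nonnegative operators in $\mathcal{B}(\mathcal{H})$. *)

From HB Require Import structures.
From mathcomp Require Import all_boot all_order all_algebra.
From mathcomp Require Import boolp classical_sets reals.
Set Implicit Arguments. Unset Strict Implicit. Unset Printing Implicit Defensive.
Import Order.TTheory GRing.Theory Num.Theory.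
Local Open Scope ring_scope.
Local Open Scope classical_set_scope.

Section Hilbert.
Variable R : realType.

Definition inorm (V : lmodType R) (ip : V -> V -> R) (x : V) : R :=
  Num.sqrt (ip x x).

Definition is_inner_product (V : lmodType R) (ip : V -> V -> R) : Prop :=
  [/\ (forall x y, ip x y = ip y x),
      (forall a x y z, ip (a *: x + y) z = a * ip x z + ip y z),
      (forall x, 0 <= ip x x) &
      (forall x, ip x x = 0 -> x = 0)].

Definition ip_complete (V : lmodType R) (ip : V -> V -> R) : Prop :=
  forall s : nat -> V,
    (forall e : R, 0 < e -> exists N : nat, forall m k : nat,
        (N <= m)%N -> (N <= k)%N -> inorm ip (s m - s k) < e) ->
    exists l : V, forall e : R, 0 < e -> exists N : nat, forall m : nat,
        (N <= m)%N -> inorm ip (s m - l) < e.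

Definition is_hilbert (V : lmodType R) (ip : V -> V -> R) : Prop :=
  is_inner_product ip /\ ip_complete ip.

Definition finite_dim (V : lmodType R) : Prop :=
  exists (d : nat) (e : 'I_d -> V),
    forall x : V, exists c : 'I_d -> R, x = \sum_(i < d) c i *: e i.

Definition bounded_op (X Y : lmodType R) (ipX : X -> X -> R) (ipY : Y -> Y -> R)
  (A : X -> Y) : Prop :=
  (forall (a : R) (x z : X), A (a *: x + z) = a *: A x + A z) /\
  exists C : R, forall x, inorm ipY (A x) <= C * inorm ipX x.

Definition opnorm (X Y : lmodType R) (ipX : X -> X -> R) (ipY : Y -> Y -> R)
  (A : X -> Y) : R :=
  sup [set inorm ipY (A x) | x in [set x | inorm ipX x <= 1]].

Definition adjoint (X Y : lmodType R) (ipX : X -> X -> R) (ipY : Y -> Y -> R)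
  (A : X -> Y) : Y -> X :=
  fun y => xget 0 [set v | forall x, ipY (A x) y = ipX x v].

(* nonnegative operator (self-adjointness not required) *)
Definition nonneg_op (X : lmodType R) (ipX : X -> X -> R) (A : X -> X) : Prop :=
  forall x, 0 <= ipX (A x) x.

Definition ip_pow (U : lmodType R) (ipU : U -> U -> R) (n : nat)
  (x z : {ffun 'I_n -> U}) : R := \sum_(i < n) ipU (x i) (z i).

Definition PhiOp (U W : lmodType R) (phi : U -> U -> W) (n : nat) (u : 'I_n -> U)
  (v : {ffun 'I_n -> U}) : W := \sum_(i < n) phi (u i) (v i).

Definition lossL (U W : lmodType R) (ipU : U -> U -> R) (ipW : W -> W -> R)
  (phi : U -> U -> W) (n : nat) (u y : 'I_n -> U) (Q : W -> W) : R :=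
  \sum_(i < n)
    inorm ipU (adjoint ipU ipW (phi (u i)) (Q (phi (u i) (u i))) - y i) ^+ 2.

Definition objP (U W : lmodType R) (ipU : U -> U -> R) (ipW : W -> W -> R)
  (phi : U -> U -> W) (n : nat) (u y : 'I_n -> U) (gamma : R) (Q : W -> W) : R :=
  lossL ipU ipW phi u y Q + gamma * opnorm ipW ipW Q.

Definition PhiMPhi (U W : lmodType R) (ipU : U -> U -> R) (ipW : W -> W -> R)
  (phi : U -> U -> W) (n : nat) (u : 'I_n -> U)
  (M : {ffun 'I_n -> U} -> {ffun 'I_n -> U}) : W -> W :=
  fun w => PhiOp phi u (M (adjoint (ip_pow ipU (n:=n)) ipW (PhiOp phi u) w)).

Definition solves_P (U W : lmodType R) (ipU : U -> U -> R) (ipW : W -> W -> R)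
  (phi : U -> U -> W) (n : nat) (u y : 'I_n -> U) (gamma : R) (Q : W -> W) : Prop :=
  [/\ bounded_op ipW ipW Q, nonneg_op ipW Q &
      forall Q' : W -> W, bounded_op ipW ipW Q' -> nonneg_op ipW Q' ->
        objP ipU ipW phi u y gamma Q <= objP ipU ipW phi u y gamma Q'].

Definition solves_P' (U W : lmodType R) (ipU : U -> U -> R) (ipW : W -> W -> R)
  (phi : U -> U -> W) (n : nat) (u y : 'I_n -> U) (gamma : R)
  (M : {ffun 'I_n -> U} -> {ffun 'I_n -> U}) : Prop :=
  [/\ bounded_op (ip_pow ipU (n:=n)) (ip_pow ipU (n:=n)) M,
      nonneg_op (ip_pow ipU (n:=n)) M &
      forall M' : {ffun 'I_n -> U} -> {ffun 'I_n -> U},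
        bounded_op (ip_pow ipU (n:=n)) (ip_pow ipU (n:=n)) M' ->
        nonneg_op (ip_pow ipU (n:=n)) M' ->
        objP ipU ipW phi u y gamma (PhiMPhi ipU ipW phi u M)
          <= objP ipU ipW phi u y gamma (PhiMPhi ipU ipW phi u M')].

End Hilbert.

From mathcomp Require Import all_boot all_order all_algebra.
From mathcomp Require Import boolp classical_sets reals.
From mathcomp Require Import ring lra.
Import Order.TTheory GRing.Theory Num.Theory.
Set Implicit Arguments. Unset Strict Implicit. Unset Printing Implicit Defensive.
Local Open Scope ring_scope.

(* Since U is finite-dimensional, the ranges of the phi(u_i) span a
   finite-dimensional subspace S of W, contained in the range of Phi.
   Gram-Schmidt yields an orthonormal basis of S, hence the orthogonal
   projection P onto S. The loss sees Q only through
   phi(u_i)^* Q phi(u_i) = phi(u_i)^* (P Q P) phi(u_i), and ||P Q P|| <= ||Q||,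
   so P Q P is at least as good as Q. Writing P = Phi B with B of finite rank,
   P Q P = Phi (B Q B^* ) Phi^* with B Q B^* nonnegative on U^n. So every
   feasible point of (P) is beaten by some Phi M Phi^* with M feasible for
   (P'), and every such Phi M Phi^* is feasible for (P); both claims follow. *)

Section Span.
Variables (R : realType) (V : lmodType R).

Definition in_span (s : seq V) (x : V) :=
  exists c : nat -> R, x = \sum_(i < size s) c i *: s`_i.

Lemma in_span0 s : in_span s 0.
Proof. by exists (fun _ => 0); rewrite big1 // => i _; rewrite scale0r. Qed.

Lemma in_spanD s x y : in_span s x -> in_span s y -> in_span s (x + y).
Proof.
move=> [c ->] [d ->]; exists (fun i => c i + d i).
by rewrite -big_split; apply: eq_bigr => i _; rewrite scalerDl.
Qed.

Lemma in_spanZ s a x : in_span s x -> in_span s (a *: x).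
Proof.
move=> [c ->]; exists (fun i => a * c i).
by rewrite scaler_sumr; apply: eq_bigr => i _; rewrite scalerA.
Qed.

Lemma in_span_sum s I (r : seq I) (P : pred I) (F : I -> V) :
  (forall i, P i -> in_span s (F i)) -> in_span s (\sum_(i <- r | P i) F i).
Proof. by move=> h; apply: big_ind => //; [exact: in_span0 | exact: in_spanD]. Qed.

Lemma in_span_ind (Pr : V -> Prop) s :
  Pr 0 -> (forall x y, Pr x -> Pr y -> Pr (x + y)) ->
  (forall a x, Pr x -> Pr (a *: x)) -> {in s, forall x, Pr x} ->
  forall x, in_span s x -> Pr x.
Proof.
move=> h0 hD hZ hs x [c ->]; apply: big_ind => // i _; apply/hZ/hs/mem_nth.
exact: ltn_ord.
Qed.

Lemma in_span_nth s i : in_span s s`_i.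
Proof.
have [hi|hi] := ltnP i (size s); last by rewrite nth_default //; apply: in_span0.
exists (fun j => (j == i)%:R).
rewrite (eq_bigr (fun j : 'I_(size s) => if (j == i :> nat) then s`_j else 0)).
  by rewrite -big_mkcond big_ord1_eq hi.
by move=> j _; case: eqP; rewrite ?scale1r ?scale0r.
Qed.

Lemma in_span_mem s x : x \in s -> in_span s x.
Proof. by move=> xs; rewrite -(nth_index 0 xs); apply: in_span_nth. Qed.

Lemma in_span_trans s t x : {in s, forall w, in_span t w} -> in_span s x -> in_span t x.
Proof.
move=> h; apply: in_span_ind => //; [exact: in_span0 | exact: in_spanD | exact: in_spanZ].
Qed.

Lemma in_span_subset s t x : {subset s <= t} -> in_span s x -> in_span t x.
Proof. by move=> st; apply: in_span_trans => w /st; apply: in_span_mem. Qed.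

End Span.

Section Linear.
Variables (R : realType) (X Y : lmodType R) (A : X -> Y).
Hypothesis hA : linear A.

Lemma lin0 : A 0 = 0.
Proof. by have := hA (-1) 0 0; rewrite scaler0 add0r scaleN1r addNr. Qed.

Lemma linD x z : A (x + z) = A x + A z.
Proof. by have := hA 1 x z; rewrite !scale1r. Qed.

Lemma linZ a x : A (a *: x) = a *: A x.
Proof. by rewrite -[a *: x]addr0 hA lin0 addr0. Qed.

Lemma lin_sum I (r : seq I) (P : pred I) (F : I -> X) :
  A (\sum_(i <- r | P i) F i) = \sum_(i <- r | P i) A (F i).
Proof. by apply: (big_morph A) => [x y|]; [exact: linD | exact: lin0]. Qed.

Lemma in_span_image s y : {in s, forall w, exists x, w = A x} ->
  in_span s y -> exists x, y = A x.
Proof.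
move=> hs; apply: (@in_span_ind _ _ (fun y => exists x, y = A x)) => //.
- by exists 0; rewrite lin0.
- by move=> _ _ [a ->] [b ->]; exists (a + b); rewrite linD.
- by move=> c _ [a ->]; exists (c *: a); rewrite linZ.
Qed.

End Linear.

Section InnerProduct.
Variables (R : realType) (V : lmodType R) (ip : V -> V -> R).
Hypothesis hip : is_inner_product ip.

Lemma ipC x y : ip x y = ip y x. Proof. by case: hip. Qed.
Lemma ipxx_ge0 x : 0 <= ip x x. Proof. by case: hip. Qed.
Lemma ipxx_eq0 x : ip x x = 0 -> x = 0. Proof. by case: hip => _ _ _; apply. Qed.

Lemma ip_linear z : linear (ip^~ z : V -> R^o).
Proof. by case: hip => _ h _ _ a x y; apply: h. Qed.

Lemma ip0l z : ip 0 z = 0. Proof. exact: (lin0 (ip_linear z)). Qed.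
Lemma ipDl x y z : ip (x + y) z = ip x z + ip y z. Proof. exact: (linD (ip_linear z) x y). Qed.
Lemma ipZl a x z : ip (a *: x) z = a * ip x z. Proof. exact: (linZ (ip_linear z) a x). Qed.
Lemma ipBl x y z : ip (x - y) z = ip x z - ip y z.
Proof. by rewrite ipDl -scaleN1r ipZl mulN1r. Qed.
Lemma ip_suml I (r : seq I) (P : pred I) (F : I -> V) z :
  ip (\sum_(i <- r | P i) F i) z = \sum_(i <- r | P i) ip (F i) z.
Proof. exact: (lin_sum (ip_linear z)). Qed.

Lemma ip0r z : ip z 0 = 0. Proof. by rewrite ipC ip0l. Qed.
Lemma ipDr x y z : ip z (x + y) = ip z x + ip z y. Proof. by rewrite !(ipC z) ipDl. Qed.
Lemma ipZr a x z : ip z (a *: x) = a * ip z x. Proof. by rewrite !(ipC z) ipZl. Qed.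
Lemma ipBr x y z : ip z (x - y) = ip z x - ip z y. Proof. by rewrite !(ipC z) ipBl. Qed.
Lemma ip_sumr I (r : seq I) (P : pred I) (F : I -> V) z :
  ip z (\sum_(i <- r | P i) F i) = \sum_(i <- r | P i) ip z (F i).
Proof. by rewrite ipC ip_suml; apply: eq_bigr => i _; rewrite ipC. Qed.

Lemma ip_eq x y : (forall z, ip z x = ip z y) -> x = y.
Proof.
by move=> h; apply/eqP; rewrite -subr_eq0; apply/eqP/ipxx_eq0; rewrite ipBr !h subrr.
Qed.

Lemma inorm_sq x : inorm ip x ^+ 2 = ip x x.
Proof. by rewrite sqr_sqrtr // ipxx_ge0. Qed.

Lemma inorm_ge0 x : 0 <= inorm ip x. Proof. exact: sqrtr_ge0. Qed.

Lemma inorm0 : inorm ip 0 = 0. Proof. by rewrite /inorm ip0l sqrtr0. Qed.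

Lemma inorm_eq0 x : inorm ip x = 0 -> x = 0.
Proof. by move/eqP; rewrite sqrtr_eq0 => h; apply/ipxx_eq0/le_anti; rewrite h ipxx_ge0. Qed.

Lemma inormZ a x : inorm ip (a *: x) = `|a| * inorm ip x.
Proof. by rewrite /inorm ipZl ipZr mulrA -expr2 sqrtrM ?sqrtr_sqr // sqr_ge0. Qed.

Lemma cauchy_schwarz x y : `|ip x y| <= inorm ip x * inorm ip y.
Proof.
rewrite -sqrtr_sqr -sqrtrM ?ipxx_ge0 // ler_sqrt ?mulr_ge0 ?ipxx_ge0 //.
have [y0|y0] := eqVneq (ip y y) 0.
  by rewrite (ipxx_eq0 y0) ip0r ip0l expr2 mul0r mulr0.
set a := ip x x; set b := ip x y; set c := ip y y.
have := ipxx_ge0 (c *: x - b *: y).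
rewrite !(ipBl, ipBr, ipZl, ipZr) (ipC y x) -/a -/b -/c.
have c_gt0 : 0 < c by rewrite lt_def y0 ipxx_ge0.
have -> : c * (c * a) - c * (b * b) - (b * (c * b) - b * (b * c)) =
  c * (a * c - b ^+ 2) by ring.
by rewrite pmulr_rge0 // subr_ge0.
Qed.

Lemma inormD x y : inorm ip (x + y) <= inorm ip x + inorm ip y.
Proof.
rewrite -(ger0_norm (addr_ge0 (inorm_ge0 x) (inorm_ge0 y))) -sqrtr_sqr ler_sqrt ?sqr_ge0 //.
rewrite ipDl !ipDr (ipC y x) sqrrD !inorm_sq.
by have := cauchy_schwarz x y; have := ler_norm (ip x y); lra.
Qed.

Definition orthonormal (g : seq V) := forall i j, (i < size g)%N ->
  (j < size g)%N -> ip g`_i g`_j = (i == j)%:R.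

Definition proj (g : seq V) (x : V) := \sum_(i < size g) ip x g`_i *: g`_i.

Lemma proj_in_span g x : in_span g (proj g x).
Proof. by exists (fun i => ip x g`_i). Qed.

Lemma proj_id g x : orthonormal g -> in_span g x -> proj g x = x.
Proof.
move=> og [c ->]; apply: eq_bigr => i _; congr (_ *: _).
rewrite ip_suml (eq_bigr (fun j : 'I_(size g) => if (j == i :> nat) then c j else 0)).
  by rewrite -big_mkcond big_ord1_eq ltn_ord.
by move=> j _; rewrite ipZl og //; case: eqP; rewrite ?mulr1 ?mulr0.
Qed.

Lemma ip_projl g x y : ip (proj g x) y = ip x (proj g y).
Proof.
rewrite ip_suml ip_sumr; apply: eq_bigr => i _.
by rewrite ipZl ipZr (ipC g`_i) mulrC.
Qed.

Lemma ip_proj_span g w x : orthonormal g -> in_span g x -> ip (proj g w) x = ip w x.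
Proof. by move=> og hx; rewrite ip_projl proj_id. Qed.

Lemma inorm_proj_le g w : orthonormal g -> inorm ip (proj g w) <= inorm ip w.
Proof.
move=> og; rewrite ler_sqrt ?ipxx_ge0 //.
have e : ip (proj g w) (proj g w) = ip w (proj g w).
  by rewrite ip_proj_span //; apply: proj_in_span.
have := ipxx_ge0 (w - proj g w).
by rewrite ipBl !ipBr e (ipC (proj g w) w); lra.
Qed.

Lemma orthonormal_rcons g e : orthonormal g ->
  (forall j, (j < size g)%N -> ip e g`_j = 0) -> ip e e = 1 -> orthonormal (rcons g e).
Proof.
move=> og eg ee i j; rewrite size_rcons !ltnS !nth_rcons.
rewrite leq_eqVlt => /predU1P [->|hi]; rewrite leq_eqVlt => /predU1P [->|hj].
- by rewrite ltnn eqxx.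
- by rewrite ltnn eqxx hj eg // eq_sym ltn_eqF.
- by rewrite hi ltnn eqxx ipC eg // ltn_eqF.
- by rewrite hi hj og.
Qed.

Lemma gram_schmidt (s : seq V) : exists g, [/\ orthonormal g,
  {in s, forall w, in_span g w} & {in g, forall w, in_span s w}].
Proof.
elim: s => [|v s [g [og hsg hgs]]]; first by exists [::].
have hgvs : {in g, forall w, in_span (v :: s) w}.
  move=> w /hgs; apply: in_span_subset => x.
  by rewrite inE orbC => ->.
pose r := v - proj g v.
have [r0|rn0] := eqVneq (inorm ip r) 0.
  exists g; split => // w; rewrite inE => /predU1P [->|/hsg //].
  by move/inorm_eq0/eqP: r0; rewrite subr_eq0 => /eqP ->; apply: proj_in_span.
pose e := (inorm ip r)^-1 *: r.
have eg j : (j < size g)%N -> ip e g`_j = 0.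
  by move=> hj; rewrite ipZl ipBl ip_proj_span ?subrr ?mulr0 //; apply: in_span_nth.
have ee : ip e e = 1.
  by rewrite ipZl ipZr -inorm_sq mulrA -expr2 -exprMn mulVf ?expr1n.
have g_sub : {subset g <= rcons g e} by move=> x; rewrite mem_rcons inE orbC => ->.
exists (rcons g e); split; first exact: orthonormal_rcons.
- move=> w; rewrite inE => /predU1P [->|/hsg]; last exact: in_span_subset.
  have -> : v = proj g v + inorm ip r *: e by rewrite scalerA mulfV // scale1r addrC subrK.
  apply: in_spanD; first exact: in_span_subset (proj_in_span g v).
  by apply/in_spanZ/in_span_mem; rewrite mem_rcons mem_head.
- move=> w; rewrite mem_rcons inE => /predU1P [->|/hgvs //].
  apply/in_spanZ/in_spanD; first by apply/in_span_mem/mem_head.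
  by rewrite -scaleN1r; apply/in_spanZ/(in_span_trans hgvs)/proj_in_span.
Qed.

Lemma finite_dim_orthonormal_basis : finite_dim V ->
  exists f, orthonormal f /\ forall x, in_span f x.
Proof.
move=> [d [e he]]; have [f [onf hef _]] := gram_schmidt [seq e i | i <- enum 'I_d].
exists f; split => // x; have [c ->] := he x.
by apply: in_span_sum => i _; apply/in_spanZ/hef/map_f; rewrite mem_enum.
Qed.

End InnerProduct.

Local Open Scope classical_set_scope.

Definition is_adjoint (R : realType) (X Y : lmodType R) (ipX : X -> X -> R)
  (ipY : Y -> Y -> R) (A : X -> Y) (B : Y -> X) :=
  forall x y, ipY (A x) y = ipX x (B y).

Definition rank1_sum (R : realType) (X Y : lmodType R) (ipX : X -> X -> R)
  (I : finType) (a : I -> X) (b : I -> Y) (x : X) : Y :=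
  \sum_l ipX x (a l) *: b l.

Lemma bounded_op_ge0 (R : realType) (X Y : lmodType R) (ipX : X -> X -> R)
  (ipY : Y -> Y -> R) (A : X -> Y) : bounded_op ipX ipY A ->
  exists2 C, 0 <= C & forall x, inorm ipY (A x) <= C * inorm ipX x.
Proof.
move=> [_ [C hC]]; exists (Num.max C 0); first by rewrite le_max lexx orbT.
move=> x; apply: le_trans (hC x) _; apply: ler_wpM2r; first exact: inorm_ge0.
by rewrite le_max lexx.
Qed.

Lemma bounded_op_comp (R : realType) (X Y Z : lmodType R) (ipX : X -> X -> R)
  (ipY : Y -> Y -> R) (ipZ : Z -> Z -> R) (A : X -> Y) (B : Y -> Z) :
  bounded_op ipX ipY A -> bounded_op ipY ipZ B -> bounded_op ipX ipZ (fun x => B (A x)).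
Proof.
move=> hA hB; split; first by move=> a x z; rewrite hA.1 hB.1.
have [C _ hC] := bounded_op_ge0 hA; have [D D0 hD] := bounded_op_ge0 hB.
by exists (D * C) => x; rewrite -mulrA; apply: le_trans (hD _) (ler_wpM2l D0 (hC x)).
Qed.

Section Operators.
Variables (R : realType) (X Y : lmodType R) (ipX : X -> X -> R) (ipY : Y -> Y -> R).
Hypotheses (hX : is_inner_product ipX) (hY : is_inner_product ipY).
Implicit Types (A : X -> Y) (B : Y -> X).

Lemma bounded_op_sum I (r : seq I) (F : I -> X -> Y) :
  (forall i, bounded_op ipX ipY (F i)) ->
  bounded_op ipX ipY (fun x => \sum_(i <- r) F i x).
Proof.
move=> hF; split.
  move=> a x z; rewrite scaler_sumr -big_split.
  by apply: eq_bigr => i _; case: (hF i).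
elim: r => [|i r [C hC]]; first by exists 0 => x; rewrite big_nil inorm0 // mul0r.
have [D _ hD] := bounded_op_ge0 (hF i).
exists (D + C) => x; rewrite big_cons mulrDl; apply: le_trans (inormD hY _ _) _.
exact: lerD.
Qed.

Lemma rank1_sum_bounded (I : finType) (a : I -> X) (b : I -> Y) :
  bounded_op ipX ipY (rank1_sum ipX a b).
Proof.
apply: bounded_op_sum => l; split.
  by move=> c x z; rewrite (ipDl hX) (ipZl hX) scalerDl scalerA.
exists (inorm ipX (a l) * inorm ipY (b l)) => x; rewrite (inormZ hY) mulrAC.
apply: ler_wpM2r; first exact: inorm_ge0.
by rewrite mulrC; apply: cauchy_schwarz.
Qed.

Lemma rank1_sum_adjoint (I : finType) (a : I -> X) (b : I -> Y) :
  is_adjoint ipX ipY (rank1_sum ipX a b) (rank1_sum ipY b a).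
Proof.
move=> x y; rewrite (ip_suml hY) (ip_sumr hX); apply: eq_bigr => l _.
by rewrite (ipZl hY) (ipZr hX) (ipC hY) mulrC.
Qed.

Lemma adjointP A B : is_adjoint ipX ipY A B -> is_adjoint ipX ipY A (adjoint ipX ipY A).
Proof.
move=> hB x y; have := @xgetPex _ 0 (fun v => forall x, ipY (A x) y = ipX x v).
by apply => //; exists (B y).
Qed.

Lemma is_adjoint_bounded A B : bounded_op ipX ipY A -> is_adjoint ipX ipY A B ->
  bounded_op ipY ipX B.
Proof.
move=> hA hB; split.
  move=> a y y'; apply: (ip_eq hX) => x.
  by rewrite -hB (ipDr hY) (ipZr hY) (ipDr hX) (ipZr hX) !hB.
have [C C0 hC] := bounded_op_ge0 hA; exists C => y.
have [By0|By_neq0] := eqVneq (inorm ipX (B y)) 0; first by rewrite By0 mulr_ge0 ?inorm_ge0.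
have sq_le : inorm ipX (B y) * inorm ipX (B y) <= C * inorm ipY y * inorm ipX (B y).
  rewrite -expr2 (inorm_sq hX) -hB; apply: le_trans (ler_norm _) _.
  apply: le_trans (cauchy_schwarz hY _ _) _; rewrite mulrAC.
  by apply: ler_wpM2r; [exact: inorm_ge0 | exact: hC].
by move: sq_le; rewrite ler_pM2r // lt_def By_neq0 inorm_ge0.
Qed.

Lemma adjoint_of_basis (f : seq X) A : orthonormal ipX f -> (forall x, in_span f x) ->
  linear A ->
  is_adjoint ipX ipY A (rank1_sum ipY (fun j : 'I_(size f) => A f`_j) (fun j => f`_j)).
Proof.
move=> onf hf hA x y; rewrite (ip_sumr hX) -{1}(proj_id hX onf (hf x)) /proj.
rewrite (lin_sum hA) (ip_suml hY); apply: eq_bigr => j _.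
by rewrite (linZ hA) (ipZl hY) (ipZr hX) (ipC hY y) mulrC.
Qed.

Lemma adjoint_finite_dim A : finite_dim X -> linear A ->
  is_adjoint ipX ipY A (adjoint ipX ipY A).
Proof.
move=> /(finite_dim_orthonormal_basis hX) [f [onf hf]] hA.
exact: adjointP (adjoint_of_basis onf hf hA).
Qed.

Lemma opnorm_has_sup A : bounded_op ipX ipY A ->
  has_sup [set inorm ipY (A x) | x in [set x | inorm ipX x <= 1]].
Proof.
move=> hA; have [C C0 hC] := bounded_op_ge0 hA; split.
  by exists (inorm ipY (A 0)), 0 => //=; rewrite (inorm0 hX).
exists C => _ [x /= hx <-]; apply: le_trans (hC x) _.
by rewrite -[leRHS]mulr1 ler_wpM2l.
Qed.

Lemma opnorm_ge0 A : bounded_op ipX ipY A -> 0 <= opnorm ipX ipY A.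
Proof.
move=> hA; apply: le_trans (inorm_ge0 _ (A 0)) _.
by apply: (sup_upper_bound (opnorm_has_sup hA)); exists 0 => //=; rewrite (inorm0 hX).
Qed.

Lemma inorm_le_opnorm A x : bounded_op ipX ipY A ->
  inorm ipY (A x) <= opnorm ipX ipY A * inorm ipX x.
Proof.
move=> hA; have [x0|x_neq0] := eqVneq (inorm ipX x) 0.
  by rewrite x0 mulr0 (inorm_eq0 hX x0) (lin0 hA.1) (inorm0 hY).
have x_gt0 : 0 < inorm ipX x by rewrite lt_def x_neq0 inorm_ge0.
rewrite -ler_pdivrMr // mulrC -[(inorm ipX x)^-1]ger0_norm ?invr_ge0 ?inorm_ge0 //.
rewrite -(inormZ hY) -(linZ hA.1); apply: (sup_upper_bound (opnorm_has_sup hA)).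
exists ((inorm ipX x)^-1 *: x) => //=.
by rewrite (inormZ hX) ger0_norm ?invr_ge0 ?inorm_ge0 // mulVf.
Qed.

Lemma opnorm_le A K : (forall x, inorm ipX x <= 1 -> inorm ipY (A x) <= K) ->
  opnorm ipX ipY A <= K.
Proof.
move=> h; apply: ge_sup; first by exists (inorm ipY (A 0)), 0 => //=; rewrite (inorm0 hX).
by move=> _ [x /= hx <-]; apply: h.
Qed.

End Operators.

Lemma opnorm_compress (R : realType) (V : lmodType R) (ip : V -> V -> R)
  (hip : is_inner_product ip) (g : seq V) (Q : V -> V) :
  orthonormal ip g -> bounded_op ip ip Q ->
  opnorm ip ip (fun w => proj ip g (Q (proj ip g w))) <= opnorm ip ip Q.
Proof.
move=> og hQ; apply: (opnorm_le hip) => w hw.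
apply: le_trans (inorm_proj_le hip _ og) _.
apply: le_trans (inorm_le_opnorm hip hip _ hQ) _.
rewrite -[leRHS]mulr1 ler_wpM2l ?(opnorm_ge0 hip) //.
exact: le_trans (inorm_proj_le hip _ og) hw.
Qed.

Lemma ip_pow_inner_product (R : realType) (U : lmodType R) (ipU : U -> U -> R) n :
  is_inner_product ipU -> is_inner_product (ip_pow ipU (n:=n)).
Proof.
move=> hU; split.
- by move=> x y; apply: eq_bigr => i _; rewrite (ipC hU).
- move=> a x y z; rewrite /ip_pow mulr_sumr -big_split; apply: eq_bigr => i _.
  by rewrite !ffunE (ipDl hU) (ipZl hU).
- by move=> x; apply: sumr_ge0 => i _; apply: (ipxx_ge0 hU).
- move=> x x0; apply/ffunP => i; rewrite ffunE; apply: (ipxx_eq0 hU).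
  by apply: (psumr_eq0P _ x0) => // j _; apply: (ipxx_ge0 hU).
Qed.

Section Representer.
Variables (R : realType) (U W : lmodType R) (ipU : U -> U -> R) (ipW : W -> W -> R).
Hypotheses (hU : is_inner_product ipU) (hW : is_inner_product ipW) (fdU : finite_dim U).
Variables (phi : U -> U -> W) (n : nat) (u : 'I_n -> U).
Hypothesis hphi : forall x, bounded_op ipU ipW (phi x).

Local Notation UN := {ffun 'I_n -> U}.
Local Notation ipN := (ip_pow ipU (n:=n)).
Local Notation Phi := (PhiOp phi u).

Let hN : is_inner_product ipN := ip_pow_inner_product n hU.

Lemma PhiOp_bounded : bounded_op ipN ipW Phi.
Proof.
rewrite /PhiOp; apply: (bounded_op_sum hW _ (F := fun i (v : UN) => phi (u i) (v i))) => i.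
apply: bounded_op_comp (hphi _); split; first by move=> a x z; rewrite !ffunE.
exists 1 => v; rewrite mul1r ler_sqrt ?(ipxx_ge0 hN) // /ip_pow (bigD1 i) //= lerDl.
by apply: sumr_ge0 => j _; apply: (ipxx_ge0 hU).
Qed.

Lemma PhiOp_adjoint : is_adjoint ipN ipW Phi (adjoint ipN ipW Phi).
Proof.
apply: (adjointP (B := fun w => [ffun i => adjoint ipU ipW (phi (u i)) w])) => v w.
rewrite /PhiOp (ip_suml hW) /ip_pow; apply: eq_bigr => i _.
by rewrite ffunE (adjoint_finite_dim hU hW fdU (hphi _).1).
Qed.

Lemma PhiMPhi_feasible M : bounded_op ipN ipN M -> nonneg_op ipN M ->
  bounded_op ipW ipW (PhiMPhi ipU ipW phi u M) /\ nonneg_op ipW (PhiMPhi ipU ipW phi u M).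
Proof.
move=> hM hMn; split; last by move=> w; rewrite /PhiMPhi PhiOp_adjoint; apply: hMn.
have hPhis := is_adjoint_bounded hN hW PhiOp_bounded PhiOp_adjoint.
exact: bounded_op_comp (bounded_op_comp hPhis hM) PhiOp_bounded.
Qed.

Lemma phi_range_basis : exists g, [/\ orthonormal ipW g,
  (forall i x, in_span g (phi (u i) x)) &
  exists z : 'I_(size g) -> UN, forall l : 'I_(size g), g`_l = Phi (z l)].
Proof.
have [d [e he]] := fdU.
pose s := [seq phi (u i) (e k) | i <- enum 'I_n, k <- enum 'I_d].
have [g [og hsg hgs]] := gram_schmidt hW s.
exists g; split => //.
  move=> i x; have [c ->] := he x; rewrite (lin_sum (hphi _).1).
  apply: in_span_sum => k _; rewrite (linZ (hphi _).1); apply/in_spanZ/hsg.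
  by apply: allpairs_f; rewrite mem_enum.
have /choice [z hz] : forall l : 'I_(size g), exists v, g`_l = Phi v; last by exists z.
move=> l; apply: (in_span_image (PhiOp_bounded).1); last by apply/hgs/mem_nth.
move=> _ /allpairsP [[i k] [_ _ ->]] /=.
exists [ffun j => if j == i then e k else 0].
rewrite /PhiOp (bigD1 i) //= ffunE eqxx big1 ?addr0 // => j hj.
by rewrite ffunE (negbTE hj) (lin0 (hphi _).1).
Qed.

Lemma lossL_compress (y : 'I_n -> U) g Q : orthonormal ipW g ->
  (forall i x, in_span g (phi (u i) x)) ->
  lossL ipU ipW phi u y (fun w => proj ipW g (Q (proj ipW g w))) = lossL ipU ipW phi u y Q.
Proof.
move=> og hg; apply: eq_bigr => i _.
have hAi := adjoint_finite_dim hU hW fdU (hphi (u i)).1.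
have adjoint_proj w :
    adjoint ipU ipW (phi (u i)) (proj ipW g w) = adjoint ipU ipW (phi (u i)) w.
  by apply: (ip_eq hU) => x; rewrite -!hAi -(ip_projl hW) proj_id.
by rewrite /= adjoint_proj (proj_id hW og (hg i (u i))).
Qed.

(* M := B Q B^* with B w = sum_l <w, g_l> z_l: then Phi B = P and B^* Phi^* = P. *)
Lemma PhiMPhi_compress g (z : 'I_(size g) -> UN) Q : orthonormal ipW g ->
  (forall l : 'I_(size g), g`_l = Phi (z l)) -> bounded_op ipW ipW Q -> nonneg_op ipW Q ->
  exists M, [/\ bounded_op ipN ipN M, nonneg_op ipN M &
    PhiMPhi ipU ipW phi u M = fun w => proj ipW g (Q (proj ipW g w))].
Proof.
move=> og hz hQ hQn.
pose B := rank1_sum ipW (fun l : 'I_(size g) => g`_l) z.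
pose A := rank1_sum ipN z (fun l : 'I_(size g) => g`_l).
have hBA : is_adjoint ipW ipN B A := rank1_sum_adjoint hW hN _ _.
have A_Phi_adjoint w : A (adjoint ipN ipW Phi w) = proj ipW g w.
  apply: eq_bigr => l _; congr (_ *: _).
  by rewrite (ipC hN) -PhiOp_adjoint -hz (ipC hW).
have Phi_B w : Phi (B w) = proj ipW g w.
  rewrite (lin_sum PhiOp_bounded.1); apply: eq_bigr => l _.
  by rewrite (linZ PhiOp_bounded.1) hz.
exists (fun v => B (Q (A v))); split.
- apply: bounded_op_comp (rank1_sum_bounded hW hN _ _).
  exact: bounded_op_comp (rank1_sum_bounded hN hW _ _) hQ.
- by move=> v; rewrite hBA; apply: hQn.
- by apply/funext => w; rewrite /PhiMPhi A_Phi_adjoint Phi_B.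
Qed.

Lemma PhiMPhi_improves y gamma Q : 0 <= gamma ->
  bounded_op ipW ipW Q -> nonneg_op ipW Q ->
  exists M, [/\ bounded_op ipN ipN M, nonneg_op ipN M &
    objP ipU ipW phi u y gamma (PhiMPhi ipU ipW phi u M) <= objP ipU ipW phi u y gamma Q].
Proof.
move=> gamma_ge0 hQ hQn; have [g [og hg [z hz]]] := phi_range_basis.
have [M [hM hMn PhiMPhi_eq]] := PhiMPhi_compress og hz hQ hQn.
exists M; split => //; rewrite PhiMPhi_eq /objP lossL_compress // lerD2l.
by apply: ler_wpM2l => //; apply: opnorm_compress.
Qed.

End Representer.

Theorem theorem1 (R : realType) (U W : lmodType R)
  (ipU : U -> U -> R) (ipW : W -> W -> R)
  (hU : is_hilbert ipU) (hW : is_hilbert ipW) (fdU : finite_dim U)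
  (phi : U -> U -> W) (hphi : forall x : U, bounded_op ipU ipW (phi x))
  (n : nat) (u y : 'I_n -> U) (gamma : R) (hgamma : 0 < gamma) :
  ((exists Q : W -> W, solves_P ipU ipW phi u y gamma Q) <->
   (exists M : {ffun 'I_n -> U} -> {ffun 'I_n -> U},
      solves_P' ipU ipW phi u y gamma M)) /\
  (forall M : {ffun 'I_n -> U} -> {ffun 'I_n -> U},
      solves_P' ipU ipW phi u y gamma M ->
      solves_P ipU ipW phi u y gamma (PhiMPhi ipU ipW phi u M)).
Proof.
have feasible := PhiMPhi_feasible hU.1 hW.1 fdU u hphi.
have improves Q := PhiMPhi_improves hU.1 hW.1 fdU u hphi y (ltW hgamma) (Q := Q).
have solves_PhiMPhi M : solves_P' ipU ipW phi u y gamma M ->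
    solves_P ipU ipW phi u y gamma (PhiMPhi ipU ipW phi u M).
  case=> hM hMn M_opt; have [hPM hPMn] := feasible M hM hMn; split => // Q hQ hQn.
  have [M' [hM' hM'n M'_le]] := improves Q hQ hQn.
  exact: le_trans (M_opt M' hM' hM'n) M'_le.
split => //; split => [[Q [hQ hQn Q_opt]]|[M /solves_PhiMPhi hM]]; last by eexists; apply: hM.
have [M [hM hMn M_le]] := improves Q hQ hQn.
exists M; split => // M' hM' hM'n; apply: le_trans M_le _.
by have [? ?] := feasible M' hM' hM'n; apply: Q_opt.
Qed.
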